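(* Let $M$ and $N$ be non-trivial $0$-left cancellative monoids with zero. Then their $0$-free product $M*_0N$ is $0$-left cancellative. Dually, if $M$ and $N$ are non-trivial $0$-right cancellative monoids, then $M*_0N$ is $0$-right cancellative.
   Context: A monoid with zero is non-trivial if $0\neq1$. $0$-left cancellative: $st=sr\neq0\Rightarrow t=r$; $0$-right cancellative: $ts=rs\neq0\Rightarrow t=r$. The $0$-free product $M*_0N$ is the coproduct of $M$ and $N$ in the category of monoids with zero and zero-preserving homomorphisms; equivalently it is the Rees quotient $(M*N)/I$ of the monoid free product $M*N$ by the ideal $I$ generated by the zeros of $M$ and $N$. *)

Set Implicit Arguments.
Unset Strict Implicit.

Record monoid0 := Monoid0 {
  car :> Type;
  mul : car -> car -> car;
  one : car;
  zero : car;
  mulA : forall x y z, mul x (mul y z) = mul (mul x y) z;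
  mul1l : forall x, mul one x = x;
  mul1r : forall x, mul x one = x;
  mul0l : forall x, mul zero x = zero;
  mul0r : forall x, mul x zero = zero
}.

Arguments mul {m} _ _.
Arguments one {m}.
Arguments zero {m}.

Definition nontrivial (M : monoid0) : Prop := (zero : M) <> one.

Definition zero_left_cancellative (M : monoid0) : Prop :=
  forall s t r : M, mul s t = mul s r -> mul s t <> zero -> t = r.

Definition zero_right_cancellative (M : monoid0) : Prop :=
  forall s t r : M, mul t s = mul r s -> mul t s <> zero -> t = r.

Definition hom0 (M N : monoid0) (f : M -> N) : Prop :=
  (forall x y : M, f (mul x y) = mul (f x) (f y)) /\ f one = one /\ f zero = zero.

Definition is_zero_free_product (M N P : monoid0) (iM : M -> P) (iN : N -> P)
  : Prop :=
  hom0 iM /\ hom0 iN /\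
  forall (Q : monoid0) (f : M -> Q) (g : N -> Q), hom0 f -> hom0 g ->
    exists! h : P -> Q,
      hom0 h /\ (forall m : M, h (iM m) = f m) /\ (forall n : N, h (iN n) = g n).

From Stdlib Require Import List ClassicalEpsilon ProofIrrelevance FunctionalExtensionality.
Import ListNotations.

(* Van der Waerden's trick: each factor acts on reduced words of letters from M and N, with
   [None] standing for 0, by multiplying into the leading letter when it comes from that factor
   and by prepending otherwise.  The universal property turns these actions into a
   representation [rep] of P such that [rep p] sends the empty word to a word evaluating to p.
   By 0-left cancellativity of M and N each letter acts injectively away from 0, hence so does
   every element of P, as P is generated by the factors.  So s t = s r <> 0 forces [rep t] and
   [rep r] to agree on the empty word, whence t = r.  The right-handed statement is the
   left-handed one for opposite monoids. *)

Set Implicit Arguments.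
Unset Strict Implicit.

Definition decide_eq {T : Type} (x y : T) : {x = y} + {x <> y} :=
  excluded_middle_informative (x = y).

Lemma proj1_sig_inj (T : Type) (Pr : T -> Prop) (x y : sig Pr) :
  proj1_sig x = proj1_sig y -> x = y.
Proof. exact (eq_sig_hprop (fun _ => proof_irrelevance _) x y). Qed.

Definition op_monoid0 (A : monoid0) : monoid0.
Proof.
  refine (@Monoid0 A (fun x y => mul y x) one zero _ _ _ _ _); intros.
  - symmetry; apply mulA.
  - apply mul1r.
  - apply mul1l.
  - apply mul0r.
  - apply mul0l.
Defined.

Lemma hom0_op (A B : monoid0) (f : A -> B) :
  hom0 f -> hom0 (M:=op_monoid0 A) (N:=op_monoid0 B) f.
Proof. intros (f_mul & f_one & f_zero); split; [|split]; auto; intros x y; apply f_mul. Qed.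

Lemma zero_free_product_op (M N P : monoid0) (iM : M -> P) (iN : N -> P) :
  is_zero_free_product iM iN ->
  is_zero_free_product (M:=op_monoid0 M) (N:=op_monoid0 N) (P:=op_monoid0 P) iM iN.
Proof.
  intros (hM & hN & univ); split; [|split]; try apply hom0_op; auto.
  intros Q f g hf hg.
  destruct (univ (op_monoid0 Q) f g (hom0_op hf) (hom0_op hg))
    as (h & (hh & h_iM & h_iN) & h_unique).
  exists h; split; [split; [exact (hom0_op hh) | auto]|].
  intros h' (hh' & h'_iM & h'_iN); apply h_unique; split; [exact (hom0_op hh') | auto].
Qed.

Definition sub_monoid0 (P : monoid0) (Pr : P -> Prop) (Pr_one : Pr one) (Pr_zero : Pr zero)
    (Pr_mul : forall p q, Pr p -> Pr q -> Pr (mul p q)) : monoid0.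
Proof.
  refine (@Monoid0 {p | Pr p}
            (fun x y => exist _ (mul (proj1_sig x) (proj1_sig y))
                          (Pr_mul _ _ (proj2_sig x) (proj2_sig y)))
            (exist _ one Pr_one) (exist _ zero Pr_zero) _ _ _ _ _);
    intros; apply proj1_sig_inj; simpl.
  - apply mulA.
  - apply mul1l.
  - apply mul1r.
  - apply mul0l.
  - apply mul0r.
Defined.

Lemma zero_free_product_ind (M N P : monoid0) (iM : M -> P) (iN : N -> P) (Pr : P -> Prop) :
  is_zero_free_product iM iN ->
  Pr one -> (forall p q, Pr p -> Pr q -> Pr (mul p q)) ->
  (forall m, Pr (iM m)) -> (forall n, Pr (iN n)) ->
  forall p, Pr p.
Proof.
  intros (hM & hN & univ) Pr_one Pr_mul Pr_iM Pr_iN p.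
  assert (Pr_zero : Pr zero) by (destruct hM as (_ & _ & iM_zero); rewrite <- iM_zero; apply Pr_iM).
  pose (S := sub_monoid0 Pr_one Pr_zero Pr_mul).
  assert (hjM : hom0 (N:=S) (fun m => exist Pr (iM m) (Pr_iM m))).
  { destruct hM as (? & ? & ?); split; [|split]; intros; apply proj1_sig_inj; simpl; auto. }
  assert (hjN : hom0 (N:=S) (fun n => exist Pr (iN n) (Pr_iN n))).
  { destruct hN as (? & ? & ?); split; [|split]; intros; apply proj1_sig_inj; simpl; auto. }
  destruct (univ S _ _ hjM hjN) as (u & ((u_mul & u_one & u_zero) & u_iM & u_iN) & _).
  destruct (univ P iM iN hM hN) as (h & _ & h_unique).
  assert (h_id : h = fun p => p).
  { apply h_unique; repeat split. }
  assert (h_u : h = fun p => proj1_sig (u p)).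
  { apply h_unique; split; [split; [|split]|split]; intros; simpl;
      rewrite ?u_mul, ?u_one, ?u_zero, ?u_iM, ?u_iN; reflexivity. }
  replace p with (h p) by (rewrite h_id; reflexivity).
  rewrite h_u; exact (proj2_sig (u p)).
Qed.

Section Endomorphisms.
Variables (X : Type) (x0 : X).

Lemma endo_ext (f g : {f : X -> X | f x0 = x0}) :
  (forall x, proj1_sig f x = proj1_sig g x) -> f = g.
Proof. intro e; apply proj1_sig_inj, functional_extensionality, e. Qed.

Definition endo0 : monoid0.
Proof.
  refine (@Monoid0 {f : X -> X | f x0 = x0}
            (fun f g => exist _ (fun x => proj1_sig f (proj1_sig g x))
                          (eq_trans (f_equal (proj1_sig f) (proj2_sig g)) (proj2_sig f)))
            (exist _ (fun x => x) eq_refl) (exist _ (fun _ => x0) eq_refl) _ _ _ _ _);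
    intros; apply endo_ext; intros; simpl; try reflexivity.
  apply (proj2_sig x).
Defined.

End Endomorphisms.

Section Evaluation.
Variables (L : Type) (P : monoid0) (val : L -> P).

Definition eval_word (w : list L) : P := fold_right (fun y p => mul (val y) p) one w.

Definition eval_opt (o : option (list L)) : P :=
  match o with Some w => eval_word w | None => zero end.

End Evaluation.

Section ReducedWords.
Variables (L : Type) (reduced : list L -> Prop).

Definition reduced_opt (o : option (list L)) : Prop :=
  match o with Some w => reduced w | None => True end.

(* [None] stands for the zero of the free product. *)
Definition rword := {o : option (list L) | reduced_opt o}.

Definition rword_zero : rword := exist _ None I.

End ReducedWords.

Section FactorAction.
Variables (A : monoid0) (L : Type) (emb : A -> L) (proj : L -> option A).
Hypothesis proj_spec : forall y a, proj y = Some a <-> y = emb a.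
Hypothesis A_nontrivial : nontrivial A.

Lemma proj_emb a : proj (emb a) = Some a.
Proof. apply proj_spec; reflexivity. Qed.

Definition head_outside (w : list L) : Prop :=
  match w with y :: _ => proj y = None | [] => True end.

Definition scons (a : A) (u : list L) : option (list L) :=
  if decide_eq a zero then None else if decide_eq a one then Some u else Some (emb a :: u).

(* [w] is read as [c * u], where [c] is the leading letter of [w] if it lies in [A]
   and [c = one] otherwise; see [peel_reduced]. *)
Definition peel (w : list L) : A * list L :=
  match w with
  | y :: u => match proj y with Some c => (c, u) | None => (one, w) end
  | [] => (one, w)
  end.

Definition act (a : A) (w : list L) : option (list L) :=
  scons (mul a (fst (peel w))) (snd (peel w)).

Definition act_opt (a : A) (o : option (list L)) : option (list L) :=
  match o with Some w => act a w | None => None end.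

Lemma scons_zero u : scons zero u = None.
Proof. unfold scons; destruct (decide_eq zero zero); congruence. Qed.

Lemma scons_one u : scons one u = Some u.
Proof.
  unfold scons; destruct (decide_eq one zero) as [e|]; [now destruct A_nontrivial|].
  destruct (decide_eq one one); congruence.
Qed.

Lemma scons_none a u : scons a u = None -> a = zero.
Proof. unfold scons; destruct (decide_eq a zero), (decide_eq a one); congruence. Qed.

Lemma peel_outside w : head_outside w -> peel w = (one, w).
Proof. destruct w as [|y w]; simpl; [reflexivity|]; intros ->; reflexivity. Qed.

Lemma peel_scons a u v : head_outside u -> scons a u = Some v -> peel v = (a, u).
Proof.
  intro hu; unfold scons; destruct (decide_eq a zero); [discriminate|].
  destruct (decide_eq a one) as [->|]; intros [= <-]; [apply peel_outside, hu|].
  simpl; rewrite proj_emb; reflexivity.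
Qed.

Variable reduced : list L -> Prop.
Hypothesis reduced_cons : forall a w,
  reduced (emb a :: w) <-> a <> zero /\ a <> one /\ reduced w /\ head_outside w.

Lemma peel_reduced w c u : reduced w -> peel w = (c, u) ->
  c <> zero /\ reduced u /\ head_outside u /\ scons c u = Some w.
Proof.
  intros hw; destruct w as [|y w]; simpl.
  { intros [= <- <-]; repeat split; auto using scons_one, not_eq_sym. }
  destruct (proj y) as [c'|] eqn:hy; intros [= <- <-].
  - apply proj_spec in hy; subst y.
    destruct (proj1 (reduced_cons _ _) hw) as (c0 & c1 & hw' & hout).
    repeat split; auto; unfold scons.
    destruct (decide_eq c' zero), (decide_eq c' one); congruence.
  - repeat split; auto using scons_one, not_eq_sym.
Qed.

Lemma scons_reduced a u v : reduced u -> head_outside u -> scons a u = Some v -> reduced v.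
Proof.
  intros hu hout; unfold scons; destruct (decide_eq a zero); [discriminate|].
  destruct (decide_eq a one); intros [= <-]; [exact hu|].
  apply reduced_cons; auto.
Qed.

Lemma act_reduced a w v : reduced w -> act a w = Some v -> reduced v.
Proof.
  unfold act; destruct (peel w) as [c u] eqn:hp; intro hw.
  destruct (peel_reduced hw hp) as (_ & hu & hout & _).
  apply scons_reduced; auto.
Qed.

Lemma act_opt_reduced a o : reduced_opt reduced o -> reduced_opt reduced (act_opt a o).
Proof.
  destruct o as [w|]; simpl; [|trivial]; intro hw.
  destruct (act a w) eqn:e; simpl; [eapply act_reduced|]; eauto.
Qed.

Lemma act_scons a x u : head_outside u -> act_opt a (scons x u) = scons (mul a x) u.
Proof.
  intro hout; destruct (scons x u) as [v|] eqn:e; simpl.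
  - unfold act; rewrite (peel_scons hout e); reflexivity.
  - rewrite (scons_none e), mul0r, scons_zero; reflexivity.
Qed.

Lemma act_mul a b w : reduced w -> act_opt a (act b w) = act (mul a b) w.
Proof.
  unfold act at 1 2; destruct (peel w) as [c u] eqn:hp; simpl; intro hw.
  destruct (peel_reduced hw hp) as (_ & _ & hout & _).
  rewrite act_scons, mulA by exact hout; reflexivity.
Qed.

Lemma act_one w : reduced w -> act one w = Some w.
Proof.
  unfold act; destruct (peel w) as [c u] eqn:hp; simpl; intro hw.
  rewrite mul1l; apply (peel_reduced hw hp).
Qed.

Lemma act_zero w : act zero w = None.
Proof. unfold act; rewrite mul0l; apply scons_zero. Qed.

Definition act_rword (a : A) (X : rword reduced) : rword reduced :=
  exist _ (act_opt a (proj1_sig X)) (act_opt_reduced a (proj2_sig X)).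

Lemma act_rword_zero a : act_rword a (rword_zero reduced) = rword_zero reduced.
Proof. apply proj1_sig_inj; reflexivity. Qed.

Definition act_endo (a : A) : endo0 (rword_zero reduced) :=
  exist _ (act_rword a) (act_rword_zero a).

Lemma act_endo_hom : hom0 act_endo.
Proof.
  split; [|split]; intros; apply endo_ext; intros [[w|] hw]; apply proj1_sig_inj; simpl;
    try reflexivity.
  - symmetry; apply act_mul, hw.
  - apply act_one, hw.
  - apply act_zero.
Qed.

Lemma act_inj (A_cancel : zero_left_cancellative A) a w w' :
  reduced w -> reduced w' -> act a w = act a w' -> act a w <> None -> w = w'.
Proof.
  unfold act; destruct (peel w) as [c u] eqn:hp, (peel w') as [c' u'] eqn:hp'; simpl.
  intros hw hw' e ne.
  destruct (peel_reduced hw hp) as (_ & _ & hout & hc),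
    (peel_reduced hw' hp') as (_ & _ & hout' & hc').
  destruct (scons (mul a c) u) as [v|] eqn:hv; [|congruence].
  pose proof (peel_scons hout hv) as pv; rewrite (peel_scons hout' (eq_sym e)) in pv.
  injection pv as e_ac ->.
  assert (c = c') as ->.
  { apply (A_cancel a); [congruence|]; intro e0; rewrite e0, scons_zero in hv; discriminate. }
  congruence.
Qed.

Lemma act_rword_inj (A_cancel : zero_left_cancellative A) a X Y :
  act_rword a X = act_rword a Y -> proj1_sig (act_rword a X) <> None -> X = Y.
Proof.
  destruct X as [[w|] hw], Y as [[w'|] hw']; intros e ne; apply (f_equal (@proj1_sig _ _)) in e;
    apply proj1_sig_inj; simpl in *; try congruence.
  f_equal; exact (act_inj A_cancel hw hw' e ne).
Qed.

Variables (P : monoid0) (val : L -> P) (iota : A -> P).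
Hypotheses (iota_hom : hom0 iota) (val_emb : forall a, val (emb a) = iota a).

Lemma eval_scons x u : eval_opt val (scons x u) = mul (iota x) (eval_word val u).
Proof.
  destruct iota_hom as (_ & iota_one & iota_zero).
  unfold scons; destruct (decide_eq x zero) as [->|]; simpl.
  - rewrite iota_zero, mul0l; reflexivity.
  - destruct (decide_eq x one) as [->|]; simpl; rewrite ?iota_one, ?mul1l, ?val_emb; reflexivity.
Qed.

Lemma eval_act_rword a X :
  eval_opt val (proj1_sig (act_rword a X)) = mul (iota a) (eval_opt val (proj1_sig X)).
Proof.
  destruct X as [[w|] hw]; simpl; [|symmetry; apply mul0r].
  unfold act; destruct (peel w) as [c u] eqn:hp; simpl.
  destruct (peel_reduced hw hp) as (_ & _ & _ & hc).
  pose proof (eval_scons c u) as ec; rewrite hc in ec; simpl in ec.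
  rewrite ec, eval_scons, mulA; f_equal; apply iota_hom.
Qed.

End FactorAction.

Section FreeProduct.
Variables M N : monoid0.
Hypotheses (M_nontrivial : nontrivial M) (N_nontrivial : nontrivial N).

Definition proj_left (y : M + N) : option M :=
  match y with inl m => Some m | inr _ => None end.

Definition proj_right (y : M + N) : option N :=
  match y with inr n => Some n | inl _ => None end.

Lemma proj_left_spec y m : proj_left y = Some m <-> y = inl m.
Proof. destruct y; simpl; split; congruence. Qed.

Lemma proj_right_spec y n : proj_right y = Some n <-> y = inr n.
Proof. destruct y; simpl; split; congruence. Qed.

Fixpoint reduced (w : list (M + N)) : Prop :=
  match w with
  | [] => True
  | inl m :: u => m <> zero /\ m <> one /\ reduced u /\ head_outside proj_left u
  | inr n :: u => n <> zero /\ n <> one /\ reduced u /\ head_outside proj_right u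
  end.

Lemma reduced_cons_left m w :
  reduced (inl m :: w) <-> m <> zero /\ m <> one /\ reduced w /\ head_outside proj_left w.
Proof. reflexivity. Qed.

Lemma reduced_cons_right n w :
  reduced (inr n :: w) <-> n <> zero /\ n <> one /\ reduced w /\ head_outside proj_right w.
Proof. reflexivity. Qed.

Definition act_left : M -> endo0 (rword_zero reduced) :=
  act_endo proj_left_spec M_nontrivial reduced_cons_left.

Definition act_right : N -> endo0 (rword_zero reduced) :=
  act_endo proj_right_spec N_nontrivial reduced_cons_right.

Variables (P : monoid0) (iM : M -> P) (iN : N -> P).
Hypothesis P_free : is_zero_free_product iM iN.

Definition letter_val (y : M + N) : P := match y with inl m => iM m | inr n => iN n end.

Section Representation.
Variable rep : P -> endo0 (rword_zero reduced).
Hypotheses (rep_hom : hom0 rep) (rep_iM : forall m, rep (iM m) = act_left m)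
  (rep_iN : forall n, rep (iN n) = act_right n).

Lemma rep_mul_apply p q X :
  proj1_sig (rep (mul p q)) X = proj1_sig (rep p) (proj1_sig (rep q) X).
Proof. destruct rep_hom as (h_mul & _); rewrite h_mul; reflexivity. Qed.

Lemma eval_rep : forall p X,
  eval_opt letter_val (proj1_sig (proj1_sig (rep p) X)) = mul p (eval_opt letter_val (proj1_sig X)).
Proof.
  pose proof P_free as (hM & hN & _).
  intro p; pattern p; apply (zero_free_product_ind P_free); clear p.
  - intro X; destruct rep_hom as (_ & -> & _); symmetry; apply mul1l.
  - intros p q IHp IHq X; rewrite rep_mul_apply, IHp, IHq; apply mulA.
  - intros m X; rewrite rep_iM; exact (eval_act_rword _ _ _ hM (fun _ => eq_refl) m X).
  - intros n X; rewrite rep_iN; exact (eval_act_rword _ _ _ hN (fun _ => eq_refl) n X).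
Qed.

Hypotheses (M_cancel : zero_left_cancellative M) (N_cancel : zero_left_cancellative N).

Lemma rep_inj : forall p X Y,
  proj1_sig (rep p) X = proj1_sig (rep p) Y -> proj1_sig (proj1_sig (rep p) X) <> None -> X = Y.
Proof.
  intro p; pattern p; apply (zero_free_product_ind P_free); clear p.
  - destruct rep_hom as (_ & -> & _); auto.
  - intros p q IHp IHq X Y; rewrite !rep_mul_apply; intros e ne.
    apply IHq; [now apply IHp|].
    intro e0; apply ne.
    replace (proj1_sig (rep q) X) with (rword_zero reduced) by (symmetry; now apply proj1_sig_inj).
    now rewrite (proj2_sig (rep p)).
  - intros m X Y; rewrite rep_iM; apply (act_rword_inj M_cancel).
  - intros n X Y; rewrite rep_iN; apply (act_rword_inj N_cancel).
Qed.

End Representation.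

Lemma zero_free_product_left_cancellative :
  zero_left_cancellative M -> zero_left_cancellative N -> zero_left_cancellative P.
Proof.
  intros M_cancel N_cancel.
  destruct P_free as (_ & _ & univ).
  destruct (univ _ act_left act_right (act_endo_hom _ _ _) (act_endo_hom _ _ _))
    as (rep & (rep_hom & rep_iM & rep_iN) & _).
  pose (empty := exist _ (Some []) I : rword reduced).
  assert (eval_empty : forall p, eval_opt letter_val (proj1_sig (proj1_sig (rep p) empty)) = p).
  { intro p; rewrite (eval_rep rep_hom rep_iM rep_iN); apply mul1r. }
  intros s t r e ne.
  assert (rep_tr : proj1_sig (rep t) empty = proj1_sig (rep r) empty).
  { apply (rep_inj rep_hom rep_iM rep_iN M_cancel N_cancel (p:=s)).
    - now rewrite <- !(rep_mul_apply rep_hom), e.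
    - rewrite <- (rep_mul_apply rep_hom); intro e0.
      apply ne; rewrite <- (eval_empty (mul s t)), e0; reflexivity. }
  now rewrite <- (eval_empty t), <- (eval_empty r), rep_tr.
Qed.

End FreeProduct.

Theorem theorem9p3 :
  (forall (M N P : monoid0) (iM : M -> P) (iN : N -> P),
      nontrivial M -> nontrivial N ->
      zero_left_cancellative M -> zero_left_cancellative N ->
      is_zero_free_product iM iN ->
      zero_left_cancellative P) /\
  (forall (M N P : monoid0) (iM : M -> P) (iN : N -> P),
      nontrivial M -> nontrivial N ->
      zero_right_cancellative M -> zero_right_cancellative N ->
      is_zero_free_product iM iN ->
      zero_right_cancellative P).
Proof.
  split; intros M N P iM iN M_nontrivial N_nontrivial M_cancel N_cancel P_free.
  - exact (zero_free_product_left_cancellative M_nontrivial N_nontrivial P_free M_cancel N_cancel).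
  - exact (zero_free_product_left_cancellative (M:=op_monoid0 M) (N:=op_monoid0 N)
             M_nontrivial N_nontrivial (zero_free_product_op P_free) M_cancel N_cancel).
Qed.
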